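(* Let $\Gamma$ be a lattice with periodic boundary conditions as below, let $\mathcal{X}$ be an artificial boundary, and let $\mathcal{E}\subseteq C_2(\Gamma)$ be a set of faces with $\mathcal{E}\cap\mathcal{X}=\emptyset$. Suppose $M$ is an $X$-type logical operator equivalent to one of the $\bar X_i$ (i.e. $M\bar X_i$ is an $X$-type stabilizer for some $i$) with $\mathrm{supp}(M)\subseteq\mathcal{E}$. Then $\mathcal{E}\cup\mathcal{X}$ is a cut set of $\Gamma$.
   Context: $\Gamma$ is a finite, connected three-dimensional cell complex without boundary (periodic boundary conditions), with edges $C_1(\Gamma)$, faces $C_2(\Gamma)$, volumes $C_3(\Gamma)$; every face lies in the boundary of exactly two distinct volumes and the dual complex is connected. $\partial(\nu)$ is the set of boundary faces of volume $\nu$ and $\iota(e)$ the set of faces containing edge $e$. The 3D toric code on $\Gamma$ has one qubit per face, stabilizer group generated by $B_e=\prod_{f\in\iota(e)}Z_f$ and $A_\nu=\prod_{f\in\partial(\nu)}X_f$, and encodes $k$ logical qubits; a logical operator is a Pauli operator commuting with all stabilizers but not in the stabilizer group (up to phase); $X_S=\prod_{f\in S}X_f$ and $\mathrm{supp}(P)$ is the set of faces where $P$ acts nontrivially. Fix $X$-type logical operators $\bar X_1,\dots,\bar X_k$, one per logical qubit. An artificial boundary is a set $\mathcal{X}=\bigcup_{i=1}^k\mathrm{supp}(\bar X_i^r)$, where each $\bar X_i^r$ is an $X$-type operator with $\bar X_i^r\bar X_i$ an $X$-type stabilizer, such that $\mathcal{X}$ contains no nonempty set $S$ with $X_S$ a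 stabilizer. A face path is a sequence of faces $\rho=(f_1,\dots,f_m)$ with pairwise distinct volumes $\Lambda(\rho)=(\nu_1,\dots,\nu_{m-1})$, $f_i,f_{i+1}\in\partial(\nu_i)$. A set of faces $K$ is a cut set of $\Gamma$ if there exist volumes $\nu,\nu'$ such that every face path $\rho$ with $f_1\in\partial(\nu)$, $f_m\in\partial(\nu')$ and $\nu,\nu'\notin\Lambda(\rho)$ meets $K$. *)

From mathcomp Require Import all_boot.
Set Implicit Arguments. Unset Strict Implicit. Unset Printing Implicit Defensive.

Section Complex.
(* P = vertices, E = edges C_1, F = faces C_2, V = volumes C_3.
   dEP e = vertices of the boundary of e, dFE f = edges of the boundary of f,
   dVF v = boundary faces of volume v  (written \partial(v) in the paper). *)
Variables (P E F V : finType).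
Variables (dEP : E -> {set P}) (dFE : F -> {set E}) (dVF : V -> {set F}).

Definition iota (e : E) : {set F} := [set f | e \in dFE f].

(* Cellular structure is recorded through the Z/2 chain
   complex condition (boundary of boundary = 0). *)
Definition closed_cell_complex3 : Prop :=
  [/\ (forall (f : F) (p : P), ~~ odd #|[set e in dFE f | p \in dEP e]|),
      (forall (v : V) (e : E), ~~ odd #|[set f in dVF v | e \in dFE f]|),
      (forall f : F, #|[set v | f \in dVF v]| = 2),
      (forall p q : P,
          connect (fun a b => [exists e, (a \in dEP e) && (b \in dEP e)]) p q)
    & (forall v w : V,
          connect (fun a b => [exists f, (f \in dVF a) && (f \in dVF b)]) v w)].

(* X-type Pauli operators X_S (up to phase) are identified with their support S.
   Product of X-type operators = symmetric difference of supports. *)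
Definition symdiff (A B : {set F}) : {set F} := (A :\: B) :|: (B :\: A).

(* X_S is a stabilizer: S is an F_2-combination of the volume boundaries,
   i.e. X_S = prod_{v in W} A_v for some set W of volumes. *)
Definition bnd_of (W : {set V}) : {set F} :=
  [set f | odd #|[set v in W | f \in dVF v]|].
Definition is_xstab (S : {set F}) : Prop := exists W : {set V}, S = bnd_of W.

(* X_S commutes with every stabilizer generator (it always commutes with the
   A_v; it commutes with B_e iff |S cap iota(e)| is even). *)
Definition xcommutes (S : {set F}) : Prop :=
  forall e : E, ~~ odd #|S :&: iota e|.

Definition xlogical (S : {set F}) : Prop := xcommutes S /\ ~ is_xstab S.

Definition xprod (k : nat) (Xb : 'I_k -> {set F}) (J : {set 'I_k}) : {set F} :=
  [set f | odd #|[set i in J | f \in Xb i]|].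

Definition xlogical_basis (k : nat) (Xb : 'I_k -> {set F}) : Prop :=
  [/\ (forall i, xcommutes (Xb i)),
      (forall J : {set 'I_k}, J != set0 -> ~ is_xstab (xprod Xb J))
    & (forall S, xlogical S -> exists J : {set 'I_k},
          is_xstab (symdiff S (xprod Xb J)))].

Definition artificial_boundary (k : nat) (Xb : 'I_k -> {set F})
    (Xset : {set F}) : Prop :=
  exists Xr : 'I_k -> {set F},
    [/\ (forall i, is_xstab (symdiff (Xr i) (Xb i))),
        Xset = \bigcup_(i < k) Xr i
      & (forall S : {set F}, S \subset Xset -> S != set0 -> ~ is_xstab S)].

(* A face path (f_1, ..., f_m) is given by its first face f, the remaining
   faces fs = (f_2..f_m) and the volumes vs = (v_1..v_{m-1}) with
   f_i, f_{i+1} in dVF v_i. *)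
Fixpoint fpath_rel (f : F) (fs : seq F) (vs : seq V) : bool :=
  match fs, vs with
  | [::], [::] => true
  | g :: fs', v :: vs' => [&& f \in dVF v, g \in dVF v & fpath_rel g fs' vs']
  | _, _ => false
  end.
Definition face_path (f : F) (fs : seq F) (vs : seq V) : bool :=
  fpath_rel f fs vs && uniq vs.

Definition cut_set (K : {set F}) : Prop :=
  exists v v' : V,
    forall (f : F) (fs : seq F) (vs : seq V),
      face_path f fs vs -> f \in dVF v -> last f fs \in dVF v' ->
      v \notin vs -> v' \notin vs ->
      (f \in K) || has (fun g => g \in K) fs.

End Complex.

(** The logical operator M and its artificial-boundary representative Xr_i
    differ by a stabiliser, i.e. by the boundary of a set W of volumes:
    M + Xr_i = ∂W.  Then ∂W ⊆ E ∪ X, and ∂W is nonempty, since otherwise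
    M = Xr_i would lie in E ∩ X = ∅ and be trivial.  As every face borders
    exactly two volumes, a face of ∂W has one volume in W and one outside,
    and any face path from a volume of W to a volume outside W has to pass
    through a face of ∂W. *)

From mathcomp Require Import all_boot.

Set Implicit Arguments.
Unset Strict Implicit.
Unset Printing Implicit Defensive.

Lemma in_symdiff (T : finType) (A B : {set T}) x :
  (x \in symdiff A B) = (x \in A) (+) (x \in B).
Proof. by rewrite !inE; case: (x \in A); case: (x \in B). Qed.

Lemma symdiff_eq0 (T : finType) (A B : {set T}) : (symdiff A B == set0) = (A == B).
Proof.
apply/eqP/eqP => [AB0|->]; last by apply/setP => x; rewrite in_symdiff addbb inE.
apply/setP => x; move/setP: AB0 => /(_ x); rewrite in_symdiff inE.
by case: (x \in A); case: (x \in B).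
Qed.

Lemma symdiff_subU (T : finType) (A B : {set T}) : symdiff A B \subset A :|: B.
Proof. by apply/subsetP => x; rewrite in_symdiff inE; case: (x \in A). Qed.

Lemma symdiff_cancelr (T : finType) (A B C : {set T}) :
  symdiff (symdiff A C) (symdiff B C) = symdiff A B.
Proof.
apply/setP => x; rewrite !in_symdiff.
by case: (x \in A); case: (x \in B); case: (x \in C).
Qed.

Lemma odd_card_symdiff (T : finType) (A B : {set T}) :
  odd #|symdiff A B| = odd #|A| (+) odd #|B|.
Proof.
have disjAB : (A :\: B) :&: (B :\: A) = set0.
  by apply/setP => x; rewrite !inE; case: (x \in A); case: (x \in B).
rewrite cardsU disjAB cards0 subn0 -(cardsID B A) -(cardsID A B) setIC !oddD.
by case: (odd _); case: (odd _); case: (odd _).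
Qed.

Section VolumeBoundary.

Variables (F V : finType) (dVF : V -> {set F}).

Lemma bnd_of0 : bnd_of dVF set0 = set0.
Proof.
apply/setP => f; rewrite !inE.
by rewrite (_ : [set v in set0 | f \in dVF v] = set0) ?cards0 //; apply/setP => v; rewrite !inE.
Qed.

Lemma bnd_of_symdiff (W1 W2 : {set V}) :
  bnd_of dVF (symdiff W1 W2) = symdiff (bnd_of dVF W1) (bnd_of dVF W2).
Proof.
apply/setP => f; rewrite in_symdiff !inE -odd_card_symdiff.
congr (odd _); apply: eq_card => v; rewrite in_symdiff !inE.
by case: (v \in W1); case: (v \in W2); case: (f \in dVF v).
Qed.

Lemma bnd_of_inside (W : {set V}) f :
  f \in bnd_of dVF W -> exists2 u, u \in W & f \in dVF u.
Proof.
rewrite inE => /odd_gt0/card_gt0P[u]; rewrite inE => /andP[uW fu].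
by exists u.
Qed.

Hypothesis two_volumes : forall f : F, #|[set v | f \in dVF v]| = 2.

Lemma bnd_of_outside (W : {set V}) f :
  f \in bnd_of dVF W -> exists2 u', u' \notin W & f \in dVF u'.
Proof.
rewrite inE => odd_in.
have := cardsID W [set v | f \in dVF v]; rewrite two_volumes.
have -> : [set v | f \in dVF v] :&: W = [set v in W | f \in dVF v].
  by apply/setP => v; rewrite !inE andbC.
have [out0|/card_gt0P[u']] := posnP #|[set v | f \in dVF v] :\: W|.
  by rewrite out0 addn0 => in2; rewrite in2 in odd_in.
by rewrite !inE => /andP[u'W fu'] _; exists u'.
Qed.

Lemma bnd_of_cross (W : {set V}) u u' f :
  u \in W -> u' \notin W -> f \in dVF u -> f \in dVF u' -> f \in bnd_of dVF W.
Proof.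
move=> uW u'W fu fu'.
have u_neq : u != u' by apply: contraNneq u'W => <-.
have vols : [set v | f \in dVF v] = [set u; u'].
  apply/eqP; rewrite eq_sym eqEcard cards2 u_neq two_volumes leqnn andbT.
  by apply/subsetP => v; rewrite !inE => /orP[] /eqP->.
rewrite inE; suff -> : [set v in W | f \in dVF v] = [set u] by rewrite cards1.
apply/setP => v; rewrite !inE.
have -> : (f \in dVF v) = (v \in [set u; u']) by rewrite -vols inE.
rewrite !inE; case: eqP => [->|_]; first by rewrite uW.
by case: eqP => [->|_]; rewrite ?(negbTE u'W) ?andbF.
Qed.

Lemma fpath_rel_cross_bnd (W : {set V}) u u' f fs vs :
  u \in W -> u' \notin W -> f \in dVF u -> last f fs \in dVF u' ->
  fpath_rel dVF f fs vs -> has [in bnd_of dVF W] (f :: fs).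
Proof.
move=> uW u'W; elim: fs f vs u uW => [|g fs IH] f [|w vs] u uW fu //= lastu'.
  by rewrite (bnd_of_cross uW u'W fu lastu').
case/and3P => fw gw path_g.
have [wW|wW] := boolP (w \in W).
  by apply/orP; right; exact: IH wW gw lastu' path_g.
by rewrite (bnd_of_cross uW wW fu fw).
Qed.

Lemma cut_set_bnd_of (W : {set V}) (K : {set F}) :
  bnd_of dVF W != set0 -> bnd_of dVF W \subset K -> cut_set dVF K.
Proof.
case/set0Pn => f0 f0W bndK.
have [u uW _] := bnd_of_inside f0W.
have [u' u'W _] := bnd_of_outside f0W.
exists u, u' => f fs vs /andP[path_f _] fu lastu' _ _.
apply: sub_has (fpath_rel_cross_bnd uW u'W fu lastu' path_f) => g.
exact: (subsetP bndK).
Qed.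

End VolumeBoundary.

Theorem lemma10 (P E F V : finType)
    (dEP : E -> {set P}) (dFE : F -> {set E}) (dVF : V -> {set F})
    (k : nat) (Xb : 'I_k -> {set F}) (Xset Eset M : {set F}) :
  closed_cell_complex3 dEP dFE dVF ->
  xlogical_basis dFE dVF Xb ->
  artificial_boundary dVF Xb Xset ->
  Eset :&: Xset = set0 ->
  xlogical dFE dVF M ->
  (exists i : 'I_k, is_xstab dVF (symdiff M (Xb i))) ->
  M \subset Eset ->
  cut_set dVF (Eset :|: Xset).
Proof.
move=> [_ _ two_volumes _ _] _ [Xr [Xr_equiv -> _]] EX [_ M_nstab] [i [W1 eqW1]] ME.
have [W2 eqW2] := Xr_equiv i.
have XrX : Xr i \subset \bigcup_(j < k) Xr j by apply: (bigcup_sup i).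
have bndW : bnd_of dVF (symdiff W1 W2) = symdiff M (Xr i).
  by rewrite bnd_of_symdiff -eqW1 -eqW2 symdiff_cancelr.
apply: (cut_set_bnd_of two_volumes (W := symdiff W1 W2)); rewrite bndW.
  rewrite symdiff_eq0; apply: contra_notN M_nstab => /eqP M_Xr.
  have -> : M = set0.
    by apply/eqP; rewrite -subset0 -EX subsetI ME M_Xr.
  by exists set0; rewrite bnd_of0.
exact: subset_trans (symdiff_subU _ _) (setUSS ME XrX).
Qed.
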